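(* Let $A$ be a store with sequence number $s_A$ performed by thread $i$, represented by a node of an acyclic modification order graph $G$. Then $U_i(CV_A) = U_i(\perp_{CV_A}) = s_A$ holds throughout each execution that terminates, where $U_i$ denotes the $i$-th component of a clock vector.
   Context: An execution is a sequence of events performed by threads. Each event $E$ has a thread id $t_E$ and a unique sequence number $s_E$ taken from a global counter that is incremented by one at every event, so sequence numbers strictly increase along the execution. A clock vector is a function from thread ids to natural numbers, with $(CV_1 \cup CV_2)(t) = \max(CV_1(t), CV_2(t))$ and $CV_1 \le CV_2$ iff $CV_1(t) \le CV_2(t)$ for all $t$; $U_i(CV) = CV(i)$. The modification order graph (mo-graph) has one node for each atomic store or atomic read-modify-write (RMW) executed so far; edges only connect nodes accessing the same memory location, and mo edges are added to it during the execution according to the C/C++ modification-order (coherence) constraints, so that the modification order it represents is consistent with the sequenced-before order of each thread. Each node $X$ stores a thread id $X.tid$, a set $X.edges$ of successor nodes (its outgoing mo edges), a field $X.rmw$ (a node or null), and a clock vector $X.cv$, also written $CV_X$. When the node for a store $A$ is created, its clock vector is $\perp_{CV_A} = \lambda t.\ (s_A \text{ if } t = t_A \text{ else } 0)$. Edges are added only by the following procedures. Merge(dst, src): if $src.cv \le dst.cv$ return false; otherwise set $dst.cv := dst.cv \cup src.cv$ and return true. AddEdge(from, to): let mustAdd be true iff ($from.rmw = to$ or $from.tid = to.tid$). If $from.cv \le to.cv$ and not mustAdd, return. While $from.rmw \ne$ null: let $next := from.rmw$; if $next = to$ stop the loop; otherwise $from := next$. Add $to$ to $from.edges$. If Merge(to,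 from) returns true, then let $Q := \{to\}$ and while $Q$ is nonempty remove a node $node$ from $Q$ and for each $dst \in node.edges$, if Merge(dst, node) returns true add $dst$ to $Q$. AddRMWEdge(from, rmw): set $from.rmw := rmw$; for each $dst \in from.edges$ with $dst \ne rmw$ add $dst$ to $rmw.edges$; set $from.edges := \emptyset$; call AddEdge(from, rmw). *)

From mathcomp Require Import all_boot.
From Stdlib Require Import Relations.

Set Implicit Arguments.
Unset Strict Implicit.
Unset Printing Implicit Defensive.

(* Clock vectors: functions from thread ids to naturals. *)
Definition CV := nat -> nat.
Definition cv_le (c1 c2 : CV) : Prop := forall t, c1 t <= c2 t.
Definition cv_union (c1 c2 : CV) : CV := fun t => maxn (c1 t) (c2 t).

(* The initial clock vector of a store with sequence number s by thread i. *)
Definition cv_bot (s i : nat) : CV := fun t => if t == i then s else 0.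

(* A node is identified by the (unique) sequence number of its store.
   [nodes] lists the nodes created so far; the other fields give, for each
   node, its thread id, its outgoing mo edges (a duplicate-free list used as
   a finite set), its rmw field, and its clock vector. *)
Record mo_state := MoState {
  nodes  : seq nat;
  ntid   : nat -> nat;
  nedges : nat -> seq nat;
  nrmw   : nat -> option nat;
  ncv    : nat -> CV }.

Definition upd {A : Type} (f : nat -> A) (n : nat) (v : A) : nat -> A :=
  fun x => if x == n then v else f x.

Definition set_cv (st : mo_state) (n : nat) (c : CV) : mo_state :=
  MoState (nodes st) (ntid st) (nedges st) (nrmw st) (upd (ncv st) n c).
Definition set_edges (st : mo_state) (n : nat) (l : seq nat) : mo_state :=
  MoState (nodes st) (ntid st) (upd (nedges st) n l) (nrmw st) (ncv st).
Definition set_rmw (st : mo_state) (n : nat) (r : option nat) : mo_state :=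
  MoState (nodes st) (ntid st) (nedges st) (upd (nrmw st) n r) (ncv st).

Definition init_state : mo_state :=
  MoState [::] (fun _ => 0) (fun _ => [::]) (fun _ => None) (fun _ _ => 0).

Definition create_node (st : mo_state) (s t : nat) : mo_state :=
  MoState (rcons (nodes st) s) (upd (ntid st) s t) (upd (nedges st) s [::])
          (upd (nrmw st) s None) (upd (ncv st) s (cv_bot s t)).

(* Merge(dst, src): big-step relation; the boolean is the returned value. *)
Inductive merge (dst src : nat) : mo_state -> mo_state -> bool -> Prop :=
| merge_no st :
    cv_le (ncv st src) (ncv st dst) -> merge dst src st st false
| merge_yes st :
    ~ cv_le (ncv st src) (ncv st dst) ->
    merge dst src st (set_cv st dst (cv_union (ncv st dst) (ncv st src))) true.

Definition add_q (x : nat) (Q : seq nat) : seq nat :=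
  if x \in Q then Q else x :: Q.

(* "for each dst in node.edges, if Merge(dst, node) add dst to Q":
   iterate over a given enumeration l of node.edges. *)
Inductive iter_edges (node : nat) :
    seq nat -> seq nat -> mo_state -> seq nat -> mo_state -> Prop :=
| ie_nil Q st : iter_edges node [::] Q st Q st
| ie_cons dst l Q st st1 b Q2 st2 :
    merge dst node st st1 b ->
    iter_edges node l (if b then add_q dst Q else Q) st1 Q2 st2 ->
    iter_edges node (dst :: l) Q st Q2 st2.

(* "while Q is nonempty remove a node from Q and ...": any node may be
   removed, and node.edges may be enumerated in any order. *)
Inductive propagate : seq nat -> mo_state -> mo_state -> Prop :=
| prop_done st : propagate [::] st st
| prop_step Q node Q1 l st Q2 st1 st2 :
    perm_eq Q (node :: Q1) ->
    perm_eq l (nedges st node) ->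
    iter_edges node l Q1 st Q2 st1 ->
    propagate Q2 st1 st2 ->
    propagate Q st st2.

(* The rmw-chain loop of AddEdge: rmw_walk to st from from' means the loop
   started at [from] terminates with [from'] (no derivation if it diverges). *)
Inductive rmw_walk (to : nat) (st : mo_state) : nat -> nat -> Prop :=
| rw_stop f : (nrmw st f = None \/ nrmw st f = Some to) -> rmw_walk to st f f
| rw_next f n f' : nrmw st f = Some n -> n <> to -> rmw_walk to st n f' ->
    rmw_walk to st f f'.

Definition add_succ (st : mo_state) (f to : nat) : mo_state :=
  set_edges st f (if to \in nedges st f then nedges st f
                  else rcons (nedges st f) to).

Definition must_add (st : mo_state) (from to : nat) : Prop :=
  nrmw st from = Some to \/ ntid st from = ntid st to.

Inductive add_edge (from to : nat) : mo_state -> mo_state -> Prop :=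
| ae_skip st :
    cv_le (ncv st from) (ncv st to) -> ~ must_add st from to ->
    add_edge from to st st
| ae_add st f' st2 b st3 :
    (~ cv_le (ncv st from) (ncv st to) \/ must_add st from to) ->
    rmw_walk to st from f' ->
    merge to f' (add_succ st f' to) st2 b ->
    (if b then propagate [:: to] st2 st3 else st3 = st2) ->
    add_edge from to st st3.

Definition rmw_prep (st : mo_state) (from rmw : nat) : mo_state :=
  let st1 := set_rmw st from (Some rmw) in
  let st2 := set_edges st1 rmw
     (nedges st1 rmw ++
      [seq d <- nedges st1 from | (d != rmw) && (d \notin nedges st1 rmw)]) in
  set_edges st2 from [::].

Inductive add_rmw_edge (from rmw : nat) : mo_state -> mo_state -> Prop :=
| are st st' : add_edge from rmw (rmw_prep st from rmw) st' ->
    add_rmw_edge from rmw st st'.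

Inductive mo_step : mo_state -> mo_state -> Prop :=
| step_create st s t :
    (forall n, n \in nodes st -> n < s) ->
    mo_step st (create_node st s t)
| step_edge st st' f t :
    f \in nodes st -> t \in nodes st -> add_edge f t st st' -> mo_step st st'
| step_rmw st st' f r :
    f \in nodes st -> r \in nodes st -> add_rmw_edge f r st st' ->
    mo_step st st'.

(* A (finite, hence terminating) execution, as the list of successive
   states, most recent first. *)
Inductive run : list mo_state -> Prop :=
| run0 : run [:: init_state]
| runS st st' tr : run (st :: tr) -> mo_step st st' -> run (st' :: st :: tr).

Definition mo_edge (st : mo_state) (x y : nat) : Prop :=
  x \in nodes st /\ y \in nodes st /\ y \in nedges st x.

Definition acyclic (st : mo_state) : Prop :=
  forall x, ~ clos_trans nat (mo_edge st) x x.

(* The modification order represented by the graph (reachability) is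
   consistent with sequenced-before: a later store of a thread is never
   mo-before an earlier store of the same thread. *)
Definition sb_consistent (st : mo_state) : Prop :=
  forall x y, x \in nodes st -> y \in nodes st -> ntid st x = ntid st y ->
    x < y -> ~ clos_trans nat (mo_edge st) y x.

From Pilot Require Import Defs.
From mathcomp Require Import all_boot.
From Stdlib Require Import Relations.
From Stdlib Require List.

Set Implicit Arguments.
Unset Strict Implicit.
Unset Printing Implicit Defensive.

(* By induction along the execution, every nonzero entry [CV_X(t)] is the
   sequence number of a store of thread [t] that reaches [X] in the mo-graph:
   merges only propagate entries along mo edges, and no graph operation
   destroys reachability.  Moreover [CV_X(t_X)] starts at [s_X] and never
   decreases.  So [CV_A(t_A)] is a store [B >= A] of thread [t_A] that reaches
   [A], and [B > A] would put a later store of [t_A] mo-before an earlier one,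
   which sb-consistency forbids. *)

Section ReflTransClosure.

Variables (T : Type) (R : relation T).

Lemma clos_rt_mono (S : relation T) :
  inclusion T R (clos_refl_trans T S) ->
  inclusion T (clos_refl_trans T R) (clos_refl_trans T S).
Proof.
move=> RS x y; elim=> [a b /RS //|a|a b c _ Hab _ Hbc]; first exact: rt_refl.
exact: rt_trans Hab Hbc.
Qed.

Lemma clos_rt_neq_t x y : clos_refl_trans T R x y -> x <> y -> clos_trans T R x y.
Proof.
move=> Hxy; case: (clos_rt_rtn1 _ _ _ _ Hxy) => [//|z w Rzy Rxz _].
exact: clos_rt_t (clos_rtn1_rt _ _ _ _ Rxz) (t_step _ _ _ _ Rzy).
Qed.

End ReflTransClosure.

Definition mo_reach (st : mo_state) : relation nat :=
  clos_refl_trans nat (mo_edge st).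

Definition graph_of (st : mo_state) :
    seq nat * (nat -> nat) * (nat -> seq nat) * (nat -> option nat) :=
  (nodes st, ntid st, nedges st, nrmw st).

Definition cv_witnessed (st : mo_state) (X t : nat) : Prop :=
  ncv st X t = 0 \/
  [/\ ncv st X t \in nodes st, ntid st (ncv st X t) = t &
      mo_reach st (ncv st X t) X].

Record mo_inv (st : mo_state) : Prop := MoInv {
  edge_closed : forall x y, y \in nedges st x -> x \in nodes st /\ y \in nodes st;
  rmw_closed : forall x r, nrmw st x = Some r -> r \in nodes st;
  cv_self_ge : forall X, X \in nodes st -> X <= ncv st X (ntid st X);
  cv_witness : forall X t, X \in nodes st -> cv_witnessed st X t }.

Lemma init_inv : mo_inv init_state.
Proof. by split. Qed.

Lemma create_inv st s t :
  (forall n, n \in nodes st -> n < s) -> mo_inv st -> mo_inv (create_node st s t).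
Proof.
move=> Hfresh [Hedges Hrmw Hself Hwit].
have Hs : s \notin nodes st by apply/negP => /Hfresh; rewrite ltnn.
have Hold x : x \in nodes st -> x \in nodes (create_node st s t).
  by move=> Hx; rewrite mem_rcons inE Hx orbT.
have Hreach x y : mo_reach st x y -> mo_reach (create_node st s t) x y.
  apply: clos_rt_mono => a b [Ha [Hb Hab]].
  apply: rt_step; do !split; rewrite ?Hold //=.
  by rewrite /upd; case: eqP => [Eas|//]; rewrite -Eas Ha in Hs.
split=> /= [x y|x r|X|X u]; rewrite /upd.
- by case: eqP => // _ /Hedges [/Hold Hx /Hold Hy].
- by case: eqP => // _ /Hrmw /Hold.
- rewrite mem_rcons inE; case: eqP => [->|_ /= /Hself //].
  by rewrite /cv_bot eqxx.
- rewrite mem_rcons inE /cv_witnessed /= /upd; case: eqP => [->|_ /= HX].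
    rewrite /cv_bot; case: eqP => [->|]; last by left.
    by right; rewrite eqxx mem_rcons mem_head; split=> //; apply: rt_refl.
  case: (Hwit X u HX) => [|[Hw Htid HwX]]; first by left.
  have -> : (ncv st X u == s) = false by apply: contraNF Hs => /eqP <-.
  by right; split; [exact: Hold | | exact: Hreach].
Qed.

Lemma merge_graph dst src st st' b :
  Defs.merge dst src st st' b -> graph_of st' = graph_of st.
Proof. by case. Qed.

Lemma iter_edges_graph node l Q st Q' st' :
  iter_edges node l Q st Q' st' -> graph_of st' = graph_of st.
Proof. by elim=> // dst {}l {}Q {}st st1 b Q2 st2 /merge_graph <-. Qed.

Lemma propagate_graph Q st st' : propagate Q st st' -> graph_of st' = graph_of st.
Proof. by elim=> // {}Q node Q1 l {}st Q2 st1 st2 _ _ /iter_edges_graph <-. Qed.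

(* [dst] only receives entries witnessed at [src], and [src] reaches [dst]. *)
Lemma merge_inv dst src st st' b :
  Defs.merge dst src st st' b -> dst \in nedges st src -> mo_inv st -> mo_inv st'.
Proof.
case=> // {}st _ Hedge [Hedges Hrmw Hself Hwit].
have [Hsrc Hdst] := Hedges _ _ Hedge.
split=> //= X; rewrite /upd.
  case: eqP => [->|_]; last exact: Hself.
  by move=> _; rewrite /cv_union leq_max Hself.
move=> t HX; rewrite /cv_witnessed /= /upd; case: eqP => [->|_]; last exact: Hwit.
rewrite /cv_union; case: (leqP (ncv st dst t) (ncv st src t)) => Hle.
  case: (Hwit src t Hsrc) => [|[Hw Htid Hreach]]; first by left.
  by right; split=> //; apply: rt_trans Hreach (rt_step _ _ _ _ _).
exact: Hwit.
Qed.

Lemma iter_edges_inv node l Q st Q' st' :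
  iter_edges node l Q st Q' st' -> {subset l <= nedges st node} ->
  mo_inv st -> mo_inv st'.
Proof.
elim=> // dst {}l {}Q {}st st1 b Q2 st2 Hmerge _ IH Hsub Hinv.
have [_ _ Eedges _] := merge_graph Hmerge.
apply: IH; last exact: merge_inv Hmerge (Hsub _ (mem_head _ _)) Hinv.
by rewrite Eedges => x Hx; apply: Hsub; rewrite inE Hx orbT.
Qed.

Lemma propagate_inv Q st st' : propagate Q st st' -> mo_inv st -> mo_inv st'.
Proof.
elim=> // {}Q node Q1 l {}st Q2 st1 st2 _ Hl Hiter _ IH Hinv.
by apply/IH/(iter_edges_inv Hiter) => // x; rewrite (perm_mem Hl).
Qed.

Lemma mo_inv_reach_mono st st' :
  nodes st' = nodes st -> ntid st' = ntid st -> ncv st' = ncv st ->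
  (forall x y, y \in nedges st' x -> x \in nodes st' /\ y \in nodes st') ->
  (forall x r, nrmw st' x = Some r -> r \in nodes st') ->
  inclusion nat (mo_edge st) (mo_reach st') ->
  mo_inv st -> mo_inv st'.
Proof.
move=> Enodes Etid Ecv Hedges Hrmw Hsub [_ _ Hself Hwit].
split=> // [X|X t]; first by rewrite Enodes Etid Ecv; apply: Hself.
rewrite /cv_witnessed Enodes Etid Ecv => /(Hwit X t) [|[Hw Htid Hreach]].
  by left.
by right; split=> //; apply: clos_rt_mono Hreach.
Qed.

Lemma mem_add_succ st f to : to \in nedges (add_succ st f to) f.
Proof. by rewrite /= /upd eqxx; case: ifP => // _; rewrite mem_rcons mem_head. Qed.

Lemma add_succ_inv st f to :
  f \in nodes st -> to \in nodes st -> mo_inv st -> mo_inv (add_succ st f to).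
Proof.
move=> Hf Hto Hinv; have [Hedges Hrmw _ _] := Hinv.
apply: mo_inv_reach_mono Hinv => //= [x y|x y [Hx [Hy Hxy]]].
  rewrite /upd; case: eqP => [->|_]; last exact: Hedges.
  case: ifP => _; first exact: Hedges.
  by rewrite mem_rcons inE => /predU1P [->|/Hedges].
apply: rt_step; do !split => //=; rewrite /upd; case: eqP => [<-|//].
by case: ifP => _; rewrite ?mem_rcons ?inE ?Hxy ?orbT.
Qed.

Lemma rmw_walk_nodes to st f f' :
  rmw_walk to st f f' -> (forall x r, nrmw st x = Some r -> r \in nodes st) ->
  f \in nodes st -> f' \in nodes st.
Proof. by elim=> // x n x' Hn _ _ IH Hrmw _; apply: IH (Hrmw _ _ Hn). Qed.

Lemma add_edge_inv from to st st' :
  add_edge from to st st' ->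
  (~ must_add st from to -> mo_inv st) ->
  (forall f', rmw_walk to st from f' -> mo_inv (add_succ st f' to)) ->
  mo_inv st'.
Proof.
case=> [{}st _ Hnot Hinv _|{}st f' st2 b st3 _ Hwalk Hmerge Hprop _ Hsucc].
  exact: Hinv.
have Hinv2 := merge_inv Hmerge (mem_add_succ _ _ _) (Hsucc _ Hwalk).
by case: b Hmerge Hprop => _ Hprop; [apply: propagate_inv Hprop _ | rewrite Hprop].
Qed.

Lemma mo_edge_graph st st' x y :
  graph_of st' = graph_of st -> mo_edge st x y -> mo_edge st' x y.
Proof. by rewrite /mo_edge => -[-> _ -> _]. Qed.

Lemma add_edge_forced from to st st' :
  add_edge from to st st' -> must_add st from to ->
  exists2 f', rmw_walk to st from f' & graph_of st' = graph_of (add_succ st f' to).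
Proof.
case=> [{}st _ Hnot /Hnot //|{}st f' st2 b st3 _ Hwalk Hmerge Hprop] _.
exists f' => //; rewrite -(merge_graph Hmerge).
by case: b Hmerge Hprop => _ Hprop; [exact: propagate_graph Hprop | rewrite Hprop].
Qed.

Lemma rmw_walk_to to st f f' : nrmw st f = Some to -> rmw_walk to st f f' -> f' = f.
Proof. by move=> Hf Hw; case: Hw Hf => // x n x' -> Hn _ [/Hn]. Qed.

Lemma rmw_link_edges st f r x : f != r ->
  nedges (add_succ (rmw_prep st f r) f r) x =
  if x == f then [:: r]
  else if x == r then
    nedges st r ++ [seq d <- nedges st f | (d != r) && (d \notin nedges st r)]
  else nedges st x.
Proof. by move=> Hfr; rewrite /= /upd eqxx; case: eqP. Qed.

(* Each edge [f -> d] removed from [f] is now an edge [r -> d], and [f -> r]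
   has been added, so [f] still reaches [d]. *)
Lemma rmw_link_inv st f r :
  f \in nodes st -> r \in nodes st -> f != r -> mo_inv st ->
  mo_inv (add_succ (rmw_prep st f r) f r).
Proof.
move=> Hf Hr Hfr Hinv; have [Hedges Hrmw _ _] := Hinv.
have Hrf : (r == f) = false by rewrite eq_sym; apply: negbTE.
apply: mo_inv_reach_mono Hinv => // [x y|x r'|x y [Hx [Hy Hxy]]].
- rewrite rmw_link_edges //; case: eqP => [->|_]; first by rewrite inE => /eqP ->.
  case: eqP => [->|_]; last exact: Hedges.
  by rewrite mem_cat mem_filter => /orP [/Hedges|/andP [_ /Hedges [_ ->]]].
- by rewrite /= /upd; case: eqP => [_ [<-] //|_ /Hrmw].
have Hfr_edge : mo_edge (add_succ (rmw_prep st f r) f r) f r.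
  by do !split => //; rewrite rmw_link_edges // eqxx mem_head.
case: (x =P f) => [Exf|/eqP /negbTE Hxf]; last first.
  apply: rt_step; do !split => //; rewrite rmw_link_edges // Hxf.
  by case: eqP => [Exr|//]; rewrite mem_cat -Exr Hxy.
subst x; case: (y =P r) => [->|/eqP Hyr]; first exact: rt_step.
apply: rt_trans (rt_step _ _ _ _ Hfr_edge) (rt_step _ _ _ _ _).
do !split => //; rewrite rmw_link_edges // Hrf eqxx mem_cat mem_filter Hxy Hyr.
by case: (y \in nedges st r).
Qed.

Lemma step_inv st st' : mo_step st st' -> acyclic st' -> mo_inv st -> mo_inv st'.
Proof.
case=> [{}st s t Hfresh _|{}st {}st' f t Hf Ht Hedge _|
         {}st {}st' f r Hf Hr Hrmw Hacyc] Hinv.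
- exact: create_inv.
- apply: add_edge_inv Hedge _ _ => // f' Hwalk.
  exact: add_succ_inv (rmw_walk_nodes Hwalk (rmw_closed Hinv) Hf) Ht Hinv.
have Hedge : add_edge f r (rmw_prep st f r) st' by case: Hrmw.
have Hlink : nrmw (rmw_prep st f r) f = Some r by rewrite /= /upd eqxx.
have Hfr : f != r.
  apply/eqP => Efr; subst r.
  have [f' Hwalk Hgraph] := add_edge_forced Hedge (or_introl Hlink).
  rewrite (rmw_walk_to Hlink Hwalk) in Hgraph.
  apply: (Hacyc f); apply/t_step/(mo_edge_graph Hgraph).
  by do !split => //; apply: mem_add_succ.
apply: add_edge_inv Hedge _ _ => [[]|f' Hwalk]; first by left.
by rewrite (rmw_walk_to Hlink Hwalk); apply: rmw_link_inv.
Qed.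

Lemma run_inv tr :
  run tr -> (forall st, List.In st tr -> acyclic st) ->
  forall st, List.In st tr -> mo_inv st.
Proof.
elim=> [_ st [<-|//]|st st' {}tr _ IH Hstep Hacyc st0]; first exact: init_inv.
have IH' := IH (fun s Hs => Hacyc s (or_intror Hs)).
case=> [<-|]; last exact: IH'.
exact: step_inv Hstep (Hacyc _ (or_introl erefl)) (IH' _ (or_introl erefl)).
Qed.

Lemma cv_own_entry st A :
  mo_inv st -> sb_consistent st -> A \in nodes st -> ncv st A (ntid st A) = A.
Proof.
move=> [_ _ Hself Hwit] Hsb HA; have HA_le := Hself A HA.
case: (Hwit A (ntid st A) HA) => [E0|[Hw Htid Hreach]].
  by move: HA_le; rewrite E0 leqn0 => /eqP ->.
apply/eqP; rewrite eqn_leq HA_le andbT leqNgt; apply/negP => HAw.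
apply: (Hsb A _ HA Hw (esym Htid) HAw).
by apply: (clos_rt_neq_t Hreach) => Ew; rewrite Ew ltnn in HAw.
Qed.

Theorem lemma2 (tr : list mo_state) :
  run tr ->
  (forall st, List.In st tr -> acyclic st /\ sb_consistent st) ->
  forall st, List.In st tr ->
  forall A, A \in nodes st ->
    ncv st A (ntid st A) = cv_bot A (ntid st A) (ntid st A) /\
    cv_bot A (ntid st A) (ntid st A) = A.
Proof.
move=> Hrun Hwf st Hst A HA.
have Hinv := run_inv Hrun (fun st' Hst' => (Hwf st' Hst').1) Hst.
rewrite /cv_bot eqxx; split=> //.
exact: cv_own_entry Hinv (Hwf st Hst).2 HA.
Qed.
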